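(* Let $(X,\mathcal{X},\mu)$ be a probability space, $(Y,\mathcal{Y})$ a measurable space, $f\colon X\to Y$ a measurable function, and $\mu_f=\mu\circ\mathit{pre}_f\colon\mathcal{Y}\to[0,1]$ the output probability measure. Let $\mathit{pre}^\sharp_f\colon\wp(Y)\to\wp(X)$ satisfy $\mathit{pre}_f(A)\subseteq\mathit{pre}^\sharp_f(A)$ for all $A\subseteq Y$, and let $\uparrow\colon\wp(X)\to\mathcal{X}$ be an abstraction. Define $\mu^\sharp_f=\mu\circ\uparrow\circ\,\mathit{pre}^\sharp_f$, $\mathit{pre}'^\flat_f(A)=X\setminus\uparrow\big(\mathit{pre}^\sharp_f(Y\setminus A)\big)$, and $\mu^\flat_f=\mu\circ\mathit{pre}'^\flat_f$. Then for all $A\in\mathcal{Y}$, $\mu^\flat_f(A)\le\mu_f(A)$ and $\mu^\flat_f(A)=1-\mu^\sharp_f(Y\setminus A)$. Furthermore, if $\mathit{pre}^\sharp_f$ and $\uparrow$ are monotone, then $\mu^\flat_f$ is monotone.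
   Context: For $f\colon X\to Y$, $\mathit{pre}_f(B)=\{x\in X\mid f(x)\in B\}$; $f$ is measurable if $\mathit{pre}_f(B)\in\mathcal{X}$ for all $B\in\mathcal{Y}$. Functions are total (every $x\in X$ has an image $f(x)$). An abstraction is a function $\uparrow\colon\wp(X)\to\mathcal{X}$ with $S\subseteq\,\uparrow(S)$ for all $S\subseteq X$. A set function is monotone if $A\subseteq B$ implies $g(A)\subseteq g(B)$ (resp. $g(A)\le g(B)$). *)

From HB Require Import structures.
From mathcomp Require Import all_boot all_order all_algebra.
From mathcomp Require Import all_classical all_reals all_analysis.
Set Implicit Arguments. Unset Strict Implicit. Unset Printing Implicit Defensive.
Import Order.TTheory GRing.Theory Num.Theory.
Local Open Scope classical_set_scope.
Local Open Scope ring_scope.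

Definition pre (X Y : Type) (f : X -> Y) (B : set Y) : set X := f @^-1` B.

Definition abstraction (d : measure_display) (X : measurableType d)
  (up : set X -> set X) : Prop :=
  (forall S, measurable (up S)) /\ (forall S, S `<=` up S).

Definition mu_sharp (d : measure_display) (X : measurableType d) (Y : Type)
  (R : realType) (mu : set X -> \bar R) (up : set X -> set X)
  (pre_sharp : set Y -> set X) (A : set Y) : \bar R :=
  mu (up (pre_sharp A)).

Definition pre_flat (X Y : Type) (up : set X -> set X)
  (pre_sharp : set Y -> set X) (A : set Y) : set X :=
  ~` up (pre_sharp (~` A)).

Definition mu_flat (d : measure_display) (X : measurableType d) (Y : Type)
  (R : realType) (mu : set X -> \bar R) (up : set X -> set X)
  (pre_sharp : set Y -> set X) (A : set Y) : \bar R :=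
  mu (pre_flat up pre_sharp A).

From HB Require Import structures.
From mathcomp Require Import all_boot all_order all_algebra.
From mathcomp Require Import all_classical all_reals all_analysis.
Import Order.TTheory GRing.Theory Num.Theory.
Local Open Scope classical_set_scope.
Local Open Scope ring_scope.

(* The complement of an over-approximation of [pre f (~` A)] is an
   under-approximation of [pre f A]; measurability of [up] makes it an event,
   so monotonicity and the complement rule of probabilities give everything. *)

Section pre_flat_sets.
Variables (X Y : Type) (up : set X -> set X) (pre_sharp : set Y -> set X).

Lemma pre_flat_sub_pre (f : X -> Y) :
  (forall S, S `<=` up S) -> (forall A, pre f A `<=` pre_sharp A) ->
  forall A, pre_flat up pre_sharp A `<=` pre f A.
Proof.
move=> up_ext pre_sharp_sup A x; apply: contra_notP => notAfx.
exact/up_ext/pre_sharp_sup.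
Qed.

Lemma pre_flat_monotone :
  (forall A B, A `<=` B -> pre_sharp A `<=` pre_sharp B) ->
  (forall S T, S `<=` T -> up S `<=` up T) ->
  forall A B, A `<=` B -> pre_flat up pre_sharp A `<=` pre_flat up pre_sharp B.
Proof. by move=> pre_sharp_mono up_mono A B /subsetC/pre_sharp_mono/up_mono/subsetC. Qed.

End pre_flat_sets.

Section mu_flat_measure.
Context {d : measure_display} {X : measurableType d} {Y : Type} {R : realType}.
Context {up : set X -> set X} {pre_sharp : set Y -> set X}.
Hypothesis up_abs : abstraction up.

Lemma measurable_pre_flat A : measurable (pre_flat up pre_sharp A).
Proof. exact/measurableC/up_abs.1. Qed.

Lemma mu_flat_le (mu : {measure set X -> \bar R}) (f : X -> Y) :
  (forall A, pre f A `<=` pre_sharp A) ->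
  forall A, measurable (pre f A) ->
  (mu_flat mu up pre_sharp A <= mu (pre f A))%E.
Proof.
move=> pre_sharp_sup A mpreA; apply: le_measure; rewrite ?inE //.
  exact: measurable_pre_flat.
exact: pre_flat_sub_pre up_abs.2 pre_sharp_sup A.
Qed.

Lemma mu_flat_monotone (mu : {measure set X -> \bar R}) :
  (forall A B, A `<=` B -> pre_sharp A `<=` pre_sharp B) ->
  (forall S T, S `<=` T -> up S `<=` up T) ->
  forall A B, A `<=` B ->
  (mu_flat mu up pre_sharp A <= mu_flat mu up pre_sharp B)%E.
Proof.
move=> pre_sharp_mono up_mono A B AB; apply: le_measure; rewrite ?inE;
  [exact: measurable_pre_flat..|].
exact: pre_flat_monotone.
Qed.

Lemma mu_flatE (mu : probability X R) A :
  mu_flat mu up pre_sharp A = (1 - mu_sharp mu up pre_sharp (~` A))%E.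
Proof. exact/probability_setC/up_abs.1. Qed.

End mu_flat_measure.

Theorem theorem2 (d : measure_display) (X : measurableType d)
  (d' : measure_display) (Y : measurableType d') (R : realType)
  (mu : probability X R) (f : X -> Y) (mf : measurable_fun setT f)
  (pre_sharp : set Y -> set X)
  (Hsharp : forall A : set Y, pre f A `<=` pre_sharp A)
  (up : set X -> set X) (Hup : abstraction up) :
  (forall A : set Y, measurable A ->
     (mu_flat mu up pre_sharp A <= mu (pre f A))%E /\
     mu_flat mu up pre_sharp A = (1 - mu_sharp mu up pre_sharp (~` A))%E) /\
  ((forall A B : set Y, A `<=` B -> pre_sharp A `<=` pre_sharp B) ->
   (forall S T : set X, S `<=` T -> up S `<=` up T) ->
   forall A B : set Y, A `<=` B ->
     (mu_flat mu up pre_sharp A <= mu_flat mu up pre_sharp B)%E).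
Proof.
split; last exact: mu_flat_monotone.
move=> A mA; split; last exact: mu_flatE.
apply: (mu_flat_le Hup mu f Hsharp).
by have := mf measurableT A mA; rewrite setTI.
Qed.
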